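(* Let $(X,P)$ be an $(N,s)$-tiling space and let $\epsilon\in(0,1)$. Then $(X^\epsilon,P)$ is an $(N,s^\epsilon)$-tiling space.
   Context: $X^\epsilon$ is the snowflake of $X$: the set $X$ with metric $d_X(x,y)^\epsilon$. $\mathbb{N}=\{0,1,\dots\}$. A covering structure on $X$ is a map $P$ from $\mathbb{N}$ or $\mathbb{Z}$ to coverings of $X$; $P_n$ its value, $\mathrm{dom}(P)$ its domain; $[T]_k=\{A\in P_{n+k}:A\subset T\}$ for $T\in P_n$. $(X,P)$ is an $N$-tiling set if (S1) for $n<m$ in $\mathrm{dom}(P)$, $A\in P_n$: $\mathrm{card}[A]_{m-n}=N^{m-n}$ and $A=\bigcup[A]_{m-n}$; (S2) for $A,B\in P_n$ there exist $m$ and $C\in P_m$ with $A\cup B\subset C$. Tiles are elements of the $P_n$. For $X$ a metric space ($\delta$ = diameter, $U(p,r)$ open ball, $hY$ = $Y$ with metric multiplied by $h$), $s\in(0,\infty)$, an $N$-tiling set is an $(N,s)$-pre-tiling space if (T1) there are $D_1,D_2>0$ with $D_1\le\delta(A)/s^n\le D_2$ for all $n\in\mathrm{dom}(P)$, $A\in P_n$; (T2) there is $E>0$ such that every $A\in P_n$ contains some $p_A$ with $U(p_A,Es^n)\subset A$. It is an $(N,s)$-tiling space if moreover (U) every sequence of tiles $(A_i)$ has a subsequence $(A_{\phi(i)})$ with $\delta(A_{\phi(i)})^{-1}A_{\phi(i)}$ converging in the Gromov–Hausdorff sense to $\delta(T)^{-1}T$ for some tile $T$. *)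

From HB Require Import structures.
From mathcomp Require Import all_boot all_order all_algebra.
From mathcomp Require Import all_classical all_reals all_analysis.
Set Implicit Arguments. Unset Strict Implicit. Unset Printing Implicit Defensive.
Import Order.TTheory GRing.Theory Num.Theory.
Local Open Scope classical_set_scope.
Local Open Scope ring_scope.

Section TilingDefs.
Variable R : realType.

Definition is_metric (X : Type) (d : X -> X -> R) : Prop :=
  (forall x y, 0 <= d x y) /\ (forall x y, d x y = 0 <-> x = y) /\
  (forall x y, d x y = d y x) /\ (forall x y z, d x z <= d x y + d y z).

Definition snowflake (X : Type) (eps : R) (d : X -> X -> R) : X -> X -> R :=
  fun x y => d x y `^ eps.

(* diameter (extended real; -oo for the empty set, +oo if unbounded) *)
Definition diam (X : Type) (d : X -> X -> R) (A : set X) : \bar R :=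
  ereal_sup [set z | exists x y, A x /\ A y /\ z = (d x y)%:E].

Definition oball (X : Type) (d : X -> X -> R) (p : X) (r : R) : set X :=
  [set y | d p y < r].

Definition covering_structure (X : Type) (dom : set int) (P : int -> set (set X)) : Prop :=
  (dom = [set n : int | 0 <= n] \/ dom = setT) /\
  (forall n, dom n -> \bigcup_(A in P n) A = setT).

Definition subtiles (X : Type) (P : int -> set (set X)) (n : int) (k : nat) (T : set X)
  : set (set X) := [set A | P (n + k%:Z) A /\ A `<=` T].

Definition tiling_set (X : Type) (dom : set int) (P : int -> set (set X)) (N : nat) : Prop :=
  covering_structure dom P /\
  (forall n (k : nat), dom n -> (0 < k)%N -> forall A, P n A ->
      (subtiles P n k A #= `I_(N ^ k))%card /\ A = \bigcup_(B in subtiles P n k A) B) /\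
  (forall n A B, dom n -> P n A -> P n B ->
      exists m C, dom m /\ P m C /\ A `|` B `<=` C).

Definition is_tile (X : Type) (dom : set int) (P : int -> set (set X)) (A : set X) : Prop :=
  exists n, dom n /\ P n A.

Definition pre_tiling_space (X : Type) (d : X -> X -> R) (dom : set int)
  (P : int -> set (set X)) (N : nat) (s : R) : Prop :=
  tiling_set dom P N /\
  (exists D1 D2 : R, 0 < D1 /\ 0 < D2 /\ forall n A, dom n -> P n A ->
      ((D1 * s ^ n)%:E <= diam d A)%E /\ (diam d A <= (D2 * s ^ n)%:E)%E) /\
  (exists E : R, 0 < E /\ forall n A, dom n -> P n A ->
      exists p, A p /\ oball d p (E * s ^ n) `<=` A).

(* The metric spaces (A, c1 * d|_A) and (B, c2 * d|_B) are within Gromov-Hausdorff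
   distance e, witnessed by isometric embeddings into a common metric space Z
   whose images are mutually e-close (Hausdorff distance). *)
Definition GH_close (X : Type) (d : X -> X -> R) (c1 : R) (A : set X)
  (c2 : R) (B : set X) (e : R) : Prop :=
  exists (Z : Type) (dZ : Z -> Z -> R) (f g : X -> Z),
    is_metric dZ /\
    (forall x y, A x -> A y -> dZ (f x) (f y) = c1 * d x y) /\
    (forall x y, B x -> B y -> dZ (g x) (g y) = c2 * d x y) /\
    (forall x, A x -> exists y, B y /\ dZ (f x) (g y) < e) /\
    (forall y, B y -> exists x, A x /\ dZ (f x) (g y) < e).

Definition GH_converges_rescaled (X : Type) (d : X -> X -> R) (A : nat -> set X)
  (T : set X) : Prop :=
  forall e : R, 0 < e -> exists i0 : nat, forall i : nat, (i0 <= i)%N ->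
    GH_close d (fine (diam d (A i)))^-1 (A i) (fine (diam d T))^-1 T e.

Definition tiling_space (X : Type) (d : X -> X -> R) (dom : set int)
  (P : int -> set (set X)) (N : nat) (s : R) : Prop :=
  pre_tiling_space d dom P N s /\
  (forall A : nat -> set X, (forall i, is_tile dom P (A i)) ->
     exists phi : nat -> nat, {homo phi : i j / (i < j)%N} /\
       exists T, is_tile dom P T /\ GH_converges_rescaled d (fun i => A (phi i)) T).

End TilingDefs.

From HB Require Import structures.
From mathcomp Require Import all_boot all_order all_algebra.
From mathcomp Require Import all_classical all_reals all_analysis.
Import Order.TTheory GRing.Theory Num.Theory.
Local Open Scope classical_set_scope.
Local Open Scope ring_scope.

(* For [0 < eps < 1], [t |-> t `^ eps] is a subadditive increasing bijection of
   [0, +oo[.  Subadditivity makes [d `^ eps] a metric; monotonicity turns every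
   quantity in (T1), (T2) and (U) -- diameters, radii of inscribed balls,
   Gromov-Hausdorff distances -- into its [eps]-th power, so the same constants
   raised to the power [eps] work, with [s] replaced by [s `^ eps]. *)

Definition tiles_diam_scaled {R : realType} {X : Type} (d : X -> X -> R)
    (dom : set int) (P : int -> set (set X)) (s : R) : Prop :=
  exists D1 D2 : R, 0 < D1 /\ 0 < D2 /\ forall n A, dom n -> P n A ->
    ((D1 * s ^ n)%:E <= diam d A)%E /\ (diam d A <= (D2 * s ^ n)%:E)%E.

Definition tiles_contain_ball {R : realType} {X : Type} (d : X -> X -> R)
    (dom : set int) (P : int -> set (set X)) (s : R) : Prop :=
  exists E : R, 0 < E /\ forall n A, dom n -> P n A ->
    exists p, A p /\ oball d p (E * s ^ n) `<=` A.

Section PowR.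
Context {R : realType}.

Lemma powR_exprz (a r : R) (n : int) : 0 <= a -> (a ^ n) `^ r = (a `^ r) ^ n.
Proof. by move=> a0; rewrite -powR_intmul // powRAC powR_intmul // powR_ge0. Qed.

Lemma powR_inv (a r : R) : 0 <= a -> (a^-1) `^ r = (a `^ r)^-1.
Proof. by move=> a0; rewrite -powR_inv1 // powRAC powR_inv1 // powR_ge0. Qed.

Lemma powRVK (r a : R) : r != 0 -> 0 <= a -> (a `^ r^-1) `^ r = a.
Proof. by move=> r0 a0; rewrite -powRrM mulVf // powRr1. Qed.

Lemma ler_powR2 {r : R} :
  0 < r -> {in Num.nneg &, {mono (@powR R) ^~ r : x y / x <= y}}.
Proof. by move=> r0; apply: le_mono_in; exact: gt0_ltr_powR. Qed.

Lemma ltr_powR2 {r : R} :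
  0 < r -> {in Num.nneg &, {mono (@powR R) ^~ r : x y / x < y}}.
Proof. by move=> r0; apply: leW_mono_in; exact: ler_powR2. Qed.

Lemma ler_powRD {r a b : R} : 0 < r <= 1 -> 0 <= a -> 0 <= b ->
  (a + b) `^ r <= a `^ r + b `^ r.
Proof.
move=> /andP[r0 r1] a0 b0; have [->|ab0] := eqVneq (a + b) 0.
  by rewrite powR0 ?gt_eqF // addr_ge0 // powR_ge0.
have ab : 0 < a + b by rewrite lt_def ab0 addr_ge0.
(* [t / (a + b)] lies in [0, 1], where [x <= x `^ r] *)
have frac_le t : 0 <= t -> t <= a + b -> t / (a + b) <= (t / (a + b)) `^ r.
  rewrite le_eqVlt => /predU1P[<- _|t0 tab]; first by rewrite mul0r powR_ge0.
  by apply: ger1_powR => //; rewrite divr_gt0 //= ler_pdivrMr // mul1r.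
have a_le : a <= a + b by rewrite lerDl.
have b_le : b <= a + b by rewrite lerDr.
have := lerD (frac_le a a0 a_le) (frac_le b b0 b_le).
rewrite -mulrDl divff // !powRM ?invr_ge0 ?(ltW ab) //.
rewrite -mulrDl powR_inv ?(ltW ab) //.
by rewrite ler_pdivlMr ?powR_gt0 // mul1r.
Qed.

End PowR.

Lemma is_metric_snowflake (R : realType) (X : Type) (d : X -> X -> R) (eps : R) :
  0 < eps <= 1 -> is_metric d -> is_metric (snowflake eps d).
Proof.
move=> eps01 [d0 [dE [dC dT]]]; have /andP[eps0 _] := eps01; rewrite /snowflake.
split; first by move=> x y; exact: powR_ge0.
split.
  move=> x y; split; first by move/powR_eq0_eq0/dE.
  by move/dE => ->; rewrite powR0 // gt_eqF.
split; first by move=> x y; rewrite dC.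
move=> x y z; have := ler_powRD eps01 (d0 x y) (d0 y z); apply: le_trans.
by rewrite ler_powR2 ?nnegrE ?addr_ge0.
Qed.

Lemma diam_leP (R : realType) (X : Type) (d : X -> X -> R) (A : set X) (r : R) :
  (diam d A <= r%:E)%E <-> (forall x y, A x -> A y -> d x y <= r).
Proof.
split=> [Ar x y Ax Ay|Ar].
  by rewrite -lee_fin (le_trans _ Ar) //; apply: ereal_sup_ubound; exists x, y.
by apply/ereal_supP => _ [x [y [Ax [Ay ->]]]]; rewrite lee_fin Ar.
Qed.

Section Snowflake.
Context {R : realType} {X : Type} (d : X -> X -> R) (eps : R).
Hypotheses (d_ge0 : forall x y, 0 <= d x y) (eps_gt0 : 0 < eps).
Hypothesis eps_le1 : eps <= 1.

Lemma diam_fin_nonempty {A : set X} : diam d A \is a fin_num -> A !=set0.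
Proof.
move=> Afin; apply/set0P/eqP => A0; move: Afin; rewrite /diam A0.
by rewrite (_ : [set _ | _] = set0) ?ereal_sup0 // -subset0 => z [? [? []]].
Qed.

Lemma fine_diam_ge0 {A : set X} : diam d A \is a fin_num -> 0 <= fine (diam d A).
Proof.
move=> Afin; have [x Ax] := diam_fin_nonempty Afin; apply: fine_ge0.
have dxx : ((d x x)%:E <= diam d A)%E by apply: ereal_sup_ubound; exists x, x.
by apply: le_trans dxx; rewrite lee_fin.
Qed.

Lemma diam_snowflake {A : set X} {D : R} :
  diam d A = D%:E -> diam (snowflake eps d) A = (D `^ eps)%:E.
Proof.
move=> AD; have [x Ax] : A !=set0 by apply: diam_fin_nonempty; rewrite AD.
have /diam_leP dD : (diam d A <= D%:E)%E by rewrite AD.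
have D0 : 0 <= D := le_trans (d_ge0 x x) (dD x x Ax Ax).
have snow_le : (diam (snowflake eps d) A <= (D `^ eps)%:E)%E.
  by apply/diam_leP => y z Ay Az; rewrite ler_powR2 ?nnegrE ?dD.
have le_snow q : (diam (snowflake eps d) A <= q%:E)%E -> D `^ eps <= q.
  move/diam_leP => snowq; have q0 := le_trans (powR_ge0 _ _) (snowq x x Ax Ax).
  have /diam_leP : forall y z, A y -> A z -> d y z <= q `^ eps^-1.
    move=> y z Ay Az; rewrite -(ler_powR2 eps_gt0) ?nnegrE ?powR_ge0 //.
    by rewrite powRVK ?gt_eqF ?snowq.
  by rewrite AD lee_fin -(ler_powR2 eps_gt0) ?nnegrE ?powR_ge0 // powRVK ?gt_eqF.
apply/le_anti; rewrite snow_le /=.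
case: (diam (snowflake eps d) A) le_snow => [q| |] le_snow; rewrite ?leey //.
  by rewrite lee_fin le_snow.
by move: (le_snow (-1) (leNye _)) => /(le_trans (powR_ge0 D eps)); rewrite ler0N1.
Qed.

Lemma fine_diam_snowflake {A : set X} : diam d A \is a fin_num ->
  fine (diam (snowflake eps d) A) = fine (diam d A) `^ eps.
Proof. by move=> /fineK/esym/diam_snowflake ->. Qed.

Lemma oball_snowflake (p : X) (r : R) : 0 <= r ->
  oball (snowflake eps d) p (r `^ eps) = oball d p r.
Proof.
by move=> r0; apply/funext => y; rewrite /oball /snowflake /= ltr_powR2 ?nnegrE.
Qed.

Lemma GH_close_snowflake (c1 c2 e : R) (A B : set X) : 0 <= c1 -> 0 <= c2 ->
  GH_close d c1 A c2 B e ->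
  GH_close (snowflake eps d) (c1 `^ eps) A (c2 `^ eps) B (e `^ eps).
Proof.
move=> c1_ge0 c2_ge0 [Z [dZ [f [g [dZm [fA [gB [ABe BAe]]]]]]]].
have dZ0 := dZm.1; have eps01 : 0 < eps <= 1 by rewrite eps_gt0 eps_le1.
have snow_lt x y : dZ x y < e -> snowflake eps dZ x y < e `^ eps.
  move=> lt; rewrite ltr_powR2 ?nnegrE //; exact: le_trans (dZ0 x y) (ltW lt).
exists Z, (snowflake eps dZ), f, g; split; first exact: is_metric_snowflake.
split; first by move=> x y Ax Ay; rewrite /snowflake fA // powRM.
split; first by move=> x y Bx By; rewrite /snowflake gB // powRM.
split; first by move=> x /ABe[y [By lt]]; exists y; split; last exact: snow_lt.
by move=> y /BAe[x [Ax lt]]; exists x; split; last exact: snow_lt.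
Qed.

Lemma GH_converges_rescaled_snowflake (A : nat -> set X) (T : set X) :
  (forall i, diam d (A i) \is a fin_num) -> diam d T \is a fin_num ->
  GH_converges_rescaled d A T -> GH_converges_rescaled (snowflake eps d) A T.
Proof.
move=> Afin Tfin AT e e_gt0.
have [i0 GH_i] := AT (e `^ eps^-1) (powR_gt0 _ e_gt0).
exists i0 => i /GH_i /GH_close_snowflake.
rewrite !fine_diam_snowflake // -!powR_inv ?fine_diam_ge0 //.
rewrite powRVK ?gt_eqF ?(ltW e_gt0) //.
by apply; rewrite invr_ge0 fine_diam_ge0.
Qed.

Section Tiles.
Variables (dom : set int) (P : int -> set (set X)) (s : R).
Hypothesis s_gt0 : 0 < s.

Lemma tiles_diam_scaled_snowflake :
  tiles_diam_scaled d dom P s ->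
  tiles_diam_scaled (snowflake eps d) dom P (s `^ eps).
Proof.
move=> [D1 [D2 [D1_gt0 [D2_gt0 AD12]]]].
exists (D1 `^ eps), (D2 `^ eps); do 2 (split; first exact: powR_gt0).
move=> n A dn PA; have sn : 0 <= s ^ n by rewrite exprz_ge0 // ltW.
move: (AD12 n A dn PA); case AD: (diam d A) => [D||] []; rewrite ?leey ?leNye //.
rewrite !lee_fin => lo hi; have D0 := le_trans (mulr_ge0 (ltW D1_gt0) sn) lo.
have [D1_ge0 D2_ge0] := (ltW D1_gt0, ltW D2_gt0).
rewrite (diam_snowflake AD) !lee_fin -powR_exprz ?(ltW s_gt0) // -!powRM //.
by rewrite !ler_powR2 ?nnegrE ?mulr_ge0.
Qed.

Lemma tiles_contain_ball_snowflake :
  tiles_contain_ball d dom P s ->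
  tiles_contain_ball (snowflake eps d) dom P (s `^ eps).
Proof.
move=> [E [E_gt0 ballA]]; exists (E `^ eps); split; first exact: powR_gt0.
move=> n A dn PA; have sn : 0 <= s ^ n by rewrite exprz_ge0 // ltW.
have [p [Ap pA]] := ballA n A dn PA; exists p; split => //.
rewrite -powR_exprz ?(ltW s_gt0) // -powRM ?(ltW E_gt0) //.
by rewrite oball_snowflake // mulr_ge0 // ltW.
Qed.

Lemma tile_diam_fin_num (A : set X) :
  tiles_diam_scaled d dom P s -> is_tile dom P A -> diam d A \is a fin_num.
Proof.
move=> [D1 [D2 [_ [_ AD12]]]] [n [dn PA]]; have [lo hi] := AD12 n A dn PA.
by rewrite fin_numElt (lt_le_trans (ltNyr _) lo) (le_lt_trans hi (ltry _)).
Qed.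

End Tiles.

End Snowflake.

Theorem proposition3p13 (R : realType) (X : Type) (d : X -> X -> R)
  (dom : set int) (P : int -> set (set X)) (N : nat) (s eps : R) :
  is_metric d -> 0 < s -> tiling_space d dom P N s ->
  0 < eps < 1 ->
  tiling_space (snowflake eps d) dom P N (s `^ eps).
Proof.
move=> dm s_gt0 [[TS [T1 T2]] U] /andP[eps_gt0 eps_lt1].
have eps_le1 := ltW eps_lt1; have d_ge0 := dm.1.
split.
  split=> //; split; first exact: tiles_diam_scaled_snowflake.
  exact: tiles_contain_ball_snowflake.
move=> A tileA; have [phi [phi_incr [T [tileT AT]]]] := U A tileA.
exists phi; split=> //; exists T; split=> //.
apply: GH_converges_rescaled_snowflake => // [i|]; exact: tile_diam_fin_num T1 _.
Qed.
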